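(* Let $g\in\mathrm{SL}_d(\mathbb{R})$ and $\mathcal{P}=\mathrm{span}_\mathbb{R}\{ge_1,\dots,ge_{d-1}\}$. Then: (1) Under the identification $X_{d-1,d}=\mathrm{SL}_d(\mathbb{R})/Q$, the subset $X_\mathcal{P}$ equals $gP/Q=\{gpQ:p\in P\}$. (2) The map $\varphi_g:\mathrm{PGL}_{d-1}(\mathbb{R})/\mathrm{PGL}_{d-1}(\mathbb{Z})\to X_\mathcal{P}$, $\mathbb{R}^\times m\,\mathrm{PGL}_{d-1}(\mathbb{Z})\mapsto g\begin{pmatrix}m&0\\0&1/\det m\end{pmatrix}Q$ ($m\in\mathrm{GL}_{d-1}(\mathbb{R})$), is a homeomorphism. (3) If $g'\in\mathrm{SL}_d(\mathbb{R})$ satisfies $gP=g'P$, then $(\varphi_g)_*\mu_{X_{d-1}}=(\varphi_{g'})_*\mu_{X_{d-1}}$, where $\mu_{X_{d-1}}$ is the $\mathrm{PGL}_{d-1}(\mathbb{R})$-invariant probability measure on $\mathrm{PGL}_{d-1}(\mathbb{R})/\mathrm{PGL}_{d-1}(\mathbb{Z})$.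
   Context: $X_{d-1,d}$ is the space of homothety classes $[\Lambda]=\{\alpha\Lambda:\alpha\in\mathbb{R}^\times\}$ of rank-$(d-1)$ discrete subgroups $\Lambda$ of $\mathbb{R}^d$, identified with $\mathrm{SL}_d(\mathbb{R})/Q$ via $gQ\mapsto[g\,\mathrm{span}_\mathbb{Z}\{e_1,\dots,e_{d-1}\}]$, where $Q=\{\begin{pmatrix}\lambda\gamma&*\\0&1/\det(\lambda\gamma)\end{pmatrix}:\lambda\in\mathbb{R}^\times,\gamma\in\mathrm{GL}_{d-1}(\mathbb{Z})\}$. $P=\{\begin{pmatrix}m&*\\0&1/\det m\end{pmatrix}:m\in\mathrm{GL}_{d-1}(\mathbb{R})\}$. For a hyperplane $\mathcal{P}$, $X_\mathcal{P}=\{[\Lambda]\in X_{d-1,d}:\Lambda\subseteq\mathcal{P}\}$. *)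

From HB Require Import structures.
From mathcomp Require Import all_boot all_order all_algebra.
From mathcomp Require Import all_classical all_reals all_analysis.
Set Implicit Arguments.
Unset Strict Implicit.
Unset Printing Implicit Defensive.
Import Order.TTheory GRing.Theory Num.Theory.
Import numFieldNormedType.Exports.
Local Open Scope classical_set_scope.
Local Open Scope ring_scope.
Local Open Scope quotient_scope.

(* For a subgroup H, cls g = gH and coset_space cls is G/H.            *)
Section CosetSpace.
Variables (T : Type) (cls : T -> set T).

Definition coset_space : Type := {A : set T | exists g, A = cls g}.

Definition coset_pi (g : T) : coset_space :=
  exist (fun A => exists g, A = cls g) (cls g) (ex_intro _ g erefl).

Definition coset_repr (x : coset_space) : T := projT1 (cid (proj2_sig x)).

Lemma coset_reprK : cancel coset_repr coset_pi.
Proof.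
case=> A hA; rewrite /coset_repr /coset_pi /=.
case: cid => g /= e; subst A; congr exist; exact: Prop_irrelevance.
Qed.

HB.instance Definition _ := isQuotient.Build T coset_space coset_reprK.
End CosetSpace.

Lemma det_castmx_sq (R : comPzRingType) m k (e : m = k) (A : 'M[R]_m) :
  \det (castmx (e, e) A) = \det A.
Proof. by case: k / e; rewrite castmx_id. Qed.

Section Spaces.
Variables (R : realType) (n : nat).
(* Throughout d = n.+2, so d - 1 = n.+1 >= 1. *)

Definition intmx (gam : 'M[int]_(n.+1)) : 'M[R]_(n.+1) :=
  map_mx (fun z : int => z%:~R) gam.

Definition blk (A : 'M[R]_(n.+1)) (b : 'cV[R]_(n.+1)) (c : R) : 'M[R]_(n.+2) :=
  castmx (addn1 n.+1, addn1 n.+1) (block_mx A b 0 c%:M).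

Definition SLset : set 'M[R]_(n.+2) := [set g | \det g = 1].
Definition SLt : Type := set_type SLset.
HB.instance Definition _ := Topological.copy SLt (set_type SLset).

Definition Qset : set 'M[R]_(n.+2) :=
  [set q | exists (lam : R) (gam : 'M[int]_(n.+1)) (b : 'cV[R]_(n.+1)),
     [/\ lam != 0, gam \in unitmx &
      q = blk (lam *: intmx gam) b (\det (lam *: intmx gam))^-1]].

Definition Pset : set 'M[R]_(n.+2) :=
  [set p | exists (m : 'M[R]_(n.+1)) (b : 'cV[R]_(n.+1)),
     m \in unitmx /\ p = blk m b (\det m)^-1].

Definition clsQ (h : SLt) : set SLt :=
  [set h' | exists q, Qset q /\ val h' = val h *m q].

Definition Xdd : Type := quotient_topology (coset_space clsQ).

Definition GLset : set 'M[R]_(n.+1) := [set m | m \in unitmx].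
Definition GLt : Type := set_type GLset.
HB.instance Definition _ := Topological.copy GLt (set_type GLset).

Definition clsPZ (m : GLt) : set GLt :=
  [set m' | exists (lam : R) (gam : 'M[int]_(n.+1)),
     [/\ lam != 0, gam \in unitmx & val m' = lam *: (val m *m intmx gam)]].

(* X_{d-1} = PGL_{d-1}(R)/PGL_{d-1}(Z), realised as GL_{d-1}(R)/(R^x GL_{d-1}(Z))
   with the quotient topology *)
Definition Xd1 : Type := quotient_topology (coset_space clsPZ).

Lemma GL1P : (1%:M : 'M[R]_(n.+1)) \in GLset.
Proof. by rewrite inE /GLset /= unitmx1. Qed.
Definition GL1 : GLt := exist _ 1%:M GL1P.

Lemma SL1P : (1%:M : 'M[R]_(n.+2)) \in SLset.
Proof. by rewrite inE /SLset /= det1. Qed.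
Definition SL1 : SLt := exist _ 1%:M SL1P.

HB.instance Definition _ :=
  Topological.copy Xd1 (quotient_topology (coset_space clsPZ)).
HB.instance Definition _ :=
  Topological.copy Xdd (quotient_topology (coset_space clsQ)).

HB.instance Definition _ := isPointed.Build Xd1 (\pi_Xd1 GL1).
HB.instance Definition _ := isPointed.Build Xdd (\pi_Xdd SL1).

Definition BXd1 := g_sigma_algebraType (@open Xd1).
Definition BXdd := g_sigma_algebraType (@open Xdd).
HB.instance Definition _ := Measurable.copy BXd1 (g_sigma_algebraType (@open Xd1)).
HB.instance Definition _ := Measurable.copy BXdd (g_sigma_algebraType (@open Xdd)).

Lemma GL_mulP (a b : GLt) : val a *m val b \in GLset.
Proof.
case: a b => [a ha] [b hb] /=; move: ha hb; rewrite !inE /GLset /= => ha hb.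
by rewrite unitmx_mul ha hb.
Qed.
Definition mulGL (a b : GLt) : GLt := exist _ (val a *m val b) (GL_mulP a b).

Definition actGL (m0 : GLt) (x : Xd1) : Xd1 := \pi_Xd1 (mulGL m0 (repr x)).

Definition PGL_invariant (mu : probability BXd1 R) : Prop :=
  forall (m0 : GLt) (B : set BXd1), measurable B ->
    mu (actGL m0 @^-1` B) = mu B.

Definition embmx (g : 'M[R]_(n.+2)) (m : 'M[R]_(n.+1)) : 'M[R]_(n.+2) :=
  g *m blk m 0 (\det m)^-1.

Lemma embP (g : SLt) (m : GLt) : embmx (val g) (val m) \in SLset.
Proof.
case: g m => [g hg] [m hm] /=; move: hg hm; rewrite !inE /SLset /GLset /=.
move=> hg hm; rewrite /embmx det_mulmx hg mul1r /blk det_castmx_sq det_ublock det_scalar1.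
by rewrite mulfV // -unitfE -unitmxE.
Qed.
Definition emb (g : SLt) (m : GLt) : SLt := exist _ (embmx (val g) (val m)) (embP g m).

Definition phi (g : SLt) (x : Xd1) : Xdd := \pi_Xdd (emb g (repr x)).

Definition plane (g : 'M[R]_(n.+2)) : set 'cV[R]_(n.+2) :=
  [set v | exists c : 'I_(n.+1) -> R,
     v = \sum_(i < n.+1) c i *: col (widen_ord (leqnSn n.+1) i) g].

Definition lat (h : 'M[R]_(n.+2)) : set 'cV[R]_(n.+2) :=
  [set v | exists c : 'I_(n.+1) -> int,
     v = \sum_(i < n.+1) (c i)%:~R *: col (widen_ord (leqnSn n.+1) i) h].

(* X_Plane = { [Lambda] : Lambda subset Plane }, via hQ |-> [h span_Z{e_i}] *)
Definition XP (Pl : set 'cV[R]_(n.+2)) : set Xdd :=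
  [set x | lat (val (repr x)) `<=` Pl].

Definition gPQ (g : SLt) : set Xdd :=
  [set \pi_Xdd h | h in [set h : SLt | exists p, Pset p /\ val h = val g *m p]].

Definition gP (g : SLt) : set 'M[R]_(n.+2) := [set val g *m p | p in Pset].

End Spaces.

From mathcomp Require Import all_boot all_order all_algebra.
From mathcomp Require Import all_classical all_reals all_analysis.
Import Order.TTheory GRing.Theory Num.Theory.
Import numFieldNormedType.Exports.
Local Open Scope classical_set_scope.
Local Open Scope ring_scope.
Local Open Scope quotient_scope.
Set Implicit Arguments.
Unset Strict Implicit.
Unset Printing Implicit Defensive.

(* A class hQ lies in X_P exactly when g^-1 h is block upper triangular, i.e.
   lies in P; this is (1).  The map m |-> g diag(m, 1/det m) is continuous and
   turns right multiplication by R^x GL_{d-1}(Z) into right multiplication by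
   Q, so it descends to phi_g.  On X_P its inverse reads off the upper-left
   block of g^-1 h, which is well defined up to R^x GL_{d-1}(Z); it is
   continuous because the projection SL_d(R) -> SL_d(R)/Q is open, being the
   quotient by a group acting by homeomorphisms.  Finally, gP = g'P gives
   g' = g p with p in P, and phi_g' is phi_g precomposed with the translation
   by the upper-left block of p, so (3) is the PGL_{d-1}(R)-invariance of mu. *)

Section MatrixContinuity.
Variables (R : realType) (T : topologicalType).

Lemma continuous_mx_entry a b (f : T -> 'M[R]_(a, b)) i j :
  continuous f -> continuous (fun x => f x i j).
Proof.
move=> cf x; apply: (continuous_comp (g := fun M : 'M[R]_(a, b) => M i j) (cf x)).
exact: coord_continuous.
Qed.

Lemma continuous_mx_entries a b (f : T -> 'M[R]_(a, b)) :
  (forall i j, continuous (fun x => f x i j)) -> continuous f.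
Proof.
move=> cf x A [P nP sPA]; rewrite nbhs_simpl /=.
apply: (filterS (P := fun y => forall ij : 'I_a * 'I_b, P ij.1 ij.2 (f y ij.1 ij.2))).
  by move=> y Py; apply: sPA => i j; exact: (Py (i, j)).
by apply: filter_forall => -[i j]; exact: cf (nP i j).
Qed.

Lemma continuous_mulmx a b c (f : T -> 'M[R]_(a, b)) (h : T -> 'M[R]_(b, c)) :
  continuous f -> continuous h -> continuous (fun x => f x *m h x).
Proof.
move=> cf ch; apply: continuous_mx_entries => i j.
under [X in continuous X]funext do rewrite mxE.
apply: continuous_big; first exact: add_continuous.
by move=> k _ x; apply: continuousM; exact: continuous_mx_entry.
Qed.

Lemma continuous_det m (f : T -> 'M[R]_m) :
  continuous f -> continuous (fun x => \det (f x)).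
Proof.
move=> cf; apply: continuous_big; first exact: add_continuous.
move=> s _ x; apply: cvgM; first exact: cvg_cst.
apply: continuous_big; first exact: mul_continuous.
by move=> i _; exact: continuous_mx_entry.
Qed.

Lemma continuous_castmx a b a' b' (e : (a = a') * (b = b')) (f : T -> 'M[R]_(a, b)) :
  continuous f -> continuous (fun x => castmx e (f x)).
Proof.
move=> cf; apply: continuous_mx_entries => i j.
under [X in continuous X]funext do rewrite castmxE.
exact: continuous_mx_entry.
Qed.

Lemma continuous_block_mx a1 a2 b1 b2 (f11 : T -> 'M[R]_(a1, b1))
    (f12 : T -> 'M[R]_(a1, b2)) (f21 : T -> 'M[R]_(a2, b1)) (f22 : T -> 'M[R]_(a2, b2)) :
  continuous f11 -> continuous f12 -> continuous f21 -> continuous f22 ->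
  continuous (fun x => block_mx (f11 x) (f12 x) (f21 x) (f22 x)).
Proof.
move=> c11 c12 c21 c22; apply: continuous_mx_entries => i j.
rewrite -[i]splitK -[j]splitK.
case: (fintype.split i) => i'; case: (fintype.split j) => j';
  under [X in continuous X]funext do
    rewrite ?block_mxEul ?block_mxEur ?block_mxEdl ?block_mxEdr;
  exact: continuous_mx_entry.
Qed.

Lemma continuous_ulsubmx a1 a2 b1 b2 (f : T -> 'M[R]_(a1 + a2, b1 + b2)) :
  continuous f -> continuous (fun x => ulsubmx (f x)).
Proof.
move=> cf; apply: continuous_mx_entries => i j.
under [X in continuous X]funext do rewrite !mxE.
exact: continuous_mx_entry.
Qed.

End MatrixContinuity.

Lemma castmx_mul_sq (R : pzRingType) m k (e : m = k) (A B : 'M[R]_m) :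
  castmx (e, e) A *m castmx (e, e) B = castmx (e, e) (A *m B).
Proof. by case: k / e; rewrite !castmx_id. Qed.

Section BlockMatrices.
Variables (R : realType) (n : nat).
Local Notation blk := (@blk R n).
Local Notation wd := (widen_ord (leqnSn n.+1)).

Lemma blkM (A A' : 'M[R]_(n.+1)) b b' c c' :
  blk A b c *m blk A' b' c' = blk (A *m A') (A *m b' + c' *: b) (c * c').
Proof.
rewrite /blk castmx_mul_sq mulmx_block !mulmx0 !mul0mx !addr0 add0r.
by rewrite mul_mx_scalar -scalar_mxM addrC.
Qed.

Lemma det_blk (A : 'M[R]_(n.+1)) b c : \det (blk A b c) = \det A * c.
Proof. by rewrite /blk det_castmx_sq det_ublock det_scalar1. Qed.

Lemma blk1 : blk 1%:M 0 1 = 1%:M.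
Proof.
rewrite /blk -scalar_mx_block; apply/matrixP => i j.
by rewrite castmxE !mxE -val_eqE.
Qed.

Definition ulblk (M : 'M[R]_(n.+2)) : 'M[R]_(n.+1) :=
  ulsubmx (castmx (esym (addn1 n.+1), esym (addn1 n.+1)) M).

Lemma ulblkE A b c : ulblk (blk A b c) = A.
Proof. by rewrite /ulblk /blk castmxK block_mxKul. Qed.

Definition blk_upper (M : 'M[R]_(n.+2)) := exists A b c, M = blk A b c.

Lemma blk_upper_blk A b c : blk_upper (blk A b c).
Proof. by exists A, b, c. Qed.

Lemma blk_upperM M N : blk_upper M -> blk_upper N -> blk_upper (M *m N).
Proof. by move=> [A [b [c ->]]] [A' [b' [c' ->]]]; rewrite blkM; exact: blk_upper_blk. Qed.

Lemma ulblkM M N : blk_upper M -> blk_upper N -> ulblk (M *m N) = ulblk M *m ulblk N.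
Proof. by move=> [A [b [c ->]]] [A' [b' [c' ->]]]; rewrite blkM !ulblkE. Qed.

Lemma ulblk_unitmx M : blk_upper M -> M \in unitmx -> ulblk M \in unitmx.
Proof.
by move=> [A [b [c ->]]]; rewrite ulblkE !unitmxE det_blk unitrM => /andP[].
Qed.

Lemma blk_upperP M : blk_upper M <-> forall j, M ord_max (wd j) = 0.
Proof.
split=> [[A [b [c ->]]] j|M0].
  rewrite /blk castmxE.
  have -> : cast_ord (esym (addn1 n.+1)) ord_max = rshift n.+1 (ord0 : 'I_1).
    by apply: val_inj; rewrite /= addn0.
  have -> : cast_ord (esym (addn1 n.+1)) (wd j) = lshift 1 j by exact: val_inj.
  by rewrite block_mxEdl mxE.
set M' := castmx (esym (addn1 n.+1), esym (addn1 n.+1)) M.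
exists (ulsubmx M'), (ursubmx M'), (drsubmx M' 0 0).
rewrite /blk -mx11_scalar.
have dl0 : dlsubmx M' = 0.
  apply/matrixP => i j; rewrite (ord1 i) !mxE castmxE /= -[RHS](M0 j).
  by congr (M _ _); apply: val_inj; rewrite /= ?addn0.
by rewrite -dl0 submxK castmxKV.
Qed.

Lemma continuous_blk (T : topologicalType) (f : T -> 'M[R]_(n.+1)) b c :
  continuous f -> continuous b -> continuous c ->
  continuous (fun x => blk (f x) (b x) (c x)).
Proof.
move=> cf cb cc; apply: continuous_castmx; apply: continuous_block_mx => //.
  exact: cst_continuous.
apply: continuous_mx_entries => i j.
by under [X in continuous X]funext do rewrite mxE (ord1 i) (ord1 j) mulr1n.
Qed.

Lemma continuous_ulblk (T : topologicalType) (f : T -> 'M[R]_(n.+2)) :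
  continuous f -> continuous (fun x => ulblk (f x)).
Proof. by move=> cf; apply: continuous_ulsubmx; exact: continuous_castmx. Qed.

End BlockMatrices.

Lemma coset_pi_eqE (T : Type) (cls : T -> set T) a b :
  coset_pi cls a = coset_pi cls b <-> cls a = cls b.
Proof.
split=> [/(congr1 sval) //|e].
rewrite /coset_pi; move: (ex_intro _ a _) (ex_intro _ b _); rewrite e => p1 p2.
by congr exist; exact: Prop_irrelevance.
Qed.

Definition mx_group (R : pzRingType) k (H : set 'M[R]_k) : Prop :=
  [/\ H 1%:M, forall a b, H a -> H b -> H (a *m b)
    & forall a, H a -> exists2 a', H a' & a *m a' = 1%:M].

Section RightCosets.
Variables (R : pzRingType) (k : nat) (T : Type) (v : T -> 'M[R]_k) (H : set 'M[R]_k).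
Hypothesis groupH : mx_group H.

Definition mx_rcoset (t : T) : set T := [set t' | exists h, H h /\ v t' = v t *m h].

Lemma mx_rcoset_eqP a b : mx_rcoset a = mx_rcoset b <-> exists h, H h /\ v b = v a *m h.
Proof.
case: groupH => H1 HM HV; split=> [eab|[h [Hh eb]]].
  have : mx_rcoset b b by exists 1%:M; rewrite mulmx1.
  by rewrite -eab.
have [h' Hh' hh'] := HV h Hh.
apply/seteqP; split=> t [h1 [Hh1 et]].
  by exists (h' *m h1); split; [exact: HM | rewrite et eb -mulmxA (mulmxA h) hh' mul1mx].
by exists (h *m h1); split; [exact: HM | rewrite et eb mulmxA].
Qed.

End RightCosets.

Section Subgroups.
Variables (R : realType) (n : nat).
Local Notation blk := (@blk R n).

Lemma mx_group_unitmx k (H : set 'M[R]_k.+1) a : mx_group H -> H a -> a \in unitmx.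
Proof. by case=> _ _ HV /HV [a' _ /mulmx1_unit []]. Qed.

Lemma GLset_group : mx_group (@GLset R n).
Proof.
split=> [|a b|a]; rewrite /GLset /=; first exact: unitmx1.
  by move=> ua ub; rewrite unitmx_mul ua ub.
by move=> ua; exists (invmx a); rewrite /= ?unitmx_inv ?mulmxV.
Qed.

Definition scaledGLZ : set 'M[R]_(n.+1) :=
  [set a | exists lam gam, [/\ lam != 0, gam \in unitmx & a = lam *: intmx R gam]].

Lemma intmxM (A B : 'M[int]_(n.+1)) : intmx R (A *m B) = intmx R A *m intmx R B.
Proof. exact: map_mxM. Qed.

Lemma scaledGLZ_group : mx_group scaledGLZ.
Proof.
split.
- by exists 1, 1%:M; rewrite oner_eq0 unitmx1 scale1r /intmx map_mx1.
- move=> _ _ [lam [gam [l0 u ->]]] [lam' [gam' [l0' u' ->]]].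
  exists (lam * lam'), (gam *m gam'); rewrite mulf_neq0 // unitmx_mul u u'.
  by rewrite intmxM -scalemxAl -scalemxAr scalerA.
- move=> _ [lam [gam [l0 u ->]]].
  exists (lam^-1 *: intmx R (invmx gam)).
    by exists lam^-1, (invmx gam); rewrite invr_eq0 unitmx_inv.
  by rewrite -scalemxAl -scalemxAr scalerA mulfV // scale1r -intmxM mulmxV // /intmx map_mx1.
Qed.

Definition parabolic (S : set 'M[R]_(n.+1)) : set 'M[R]_(n.+2) :=
  [set q | exists a b, S a /\ q = blk a b (\det a)^-1].

Lemma PsetE : @Pset R n = parabolic (@GLset R n).
Proof. by []. Qed.

Lemma QsetE : @Qset R n = parabolic scaledGLZ.
Proof.
apply/seteqP; split=> q.
  by move=> [lam [gam [b [l0 u ->]]]]; exists (lam *: intmx R gam), b; split=> //; exists lam, gam.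
by move=> [_ [b [[lam [gam [l0 u ->]]] ->]]]; exists lam, gam, b.
Qed.

Section Parabolic.
Variable S : set 'M[R]_(n.+1).
Hypothesis groupS : mx_group S.

Lemma parabolic_blk_upper q : parabolic S q -> blk_upper q.
Proof. by move=> [a [b [_ ->]]]; exact: blk_upper_blk. Qed.

Lemma parabolic_det q : parabolic S q -> \det q = 1.
Proof.
move=> [a [b [Sa ->]]]; rewrite det_blk mulfV // -unitfE -unitmxE.
exact: mx_group_unitmx Sa.
Qed.

Lemma parabolic_group : mx_group (parabolic S).
Proof.
case: (groupS) => S1 SM SV; split.
- by exists 1%:M, 0; rewrite det1 invr1 blk1.
- move=> _ _ [a [b [Sa ->]]] [a' [b' [Sa' ->]]].
  exists (a *m a'), (a *m b' + (\det a')^-1 *: b); split; first exact: SM.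
  by rewrite blkM det_mulmx invfM.
- move=> _ [a [b [Sa ->]]]; have [a' Sa' aa'] := SV a Sa.
  have ua : \det a \is a GRing.unit by rewrite -unitmxE; exact: mx_group_unitmx Sa.
  have da' : \det a' = (\det a)^-1.
    by apply: (mulrI ua); rewrite -det_mulmx aa' det1 mulrV.
  exists (blk a' (- \det a *: (a' *m b)) (\det a')^-1).
    by exists a', (- \det a *: (a' *m b)).
  rewrite blkM aa' da' invrK -scalemxAr mulmxA aa' mul1mx scaleNr addrC subrr.
  by rewrite mulVr ?blk1.
Qed.

Lemma blk_upper_mulr_parabolic M q : parabolic S q -> blk_upper (M *m q) <-> blk_upper M.
Proof.
have [_ _ PV] := parabolic_group; move=> Sq; split=> [up|up]; last first.
  exact: blk_upperM up (parabolic_blk_upper Sq).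
have [q' Sq' qq'] := PV q Sq.
by rewrite -[M]mulmx1 -qq' mulmxA; exact: blk_upperM up (parabolic_blk_upper Sq').
Qed.

End Parabolic.

Lemma Pset_group : mx_group (@Pset R n).
Proof. by rewrite PsetE; exact/parabolic_group/GLset_group. Qed.

Lemma PsetP M : @Pset R n M <-> blk_upper M /\ \det M = 1.
Proof.
rewrite PsetE; split=> [PM|[[A [b [c ->]]]]].
  by split; [exact: parabolic_blk_upper PM | exact: (parabolic_det GLset_group)].
rewrite det_blk => dAc; have uA : \det A \is a GRing.unit.
  by apply/unitrPr; exists c.
exists A, b; split; first by rewrite /GLset /= unitmxE.
by congr blk; apply: (mulrI uA); rewrite dAc mulrV.
Qed.

Lemma Qset_group : mx_group (@Qset R n).
Proof. by rewrite QsetE; exact/parabolic_group/scaledGLZ_group. Qed.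

Lemma Qset_det q : @Qset R n q -> \det q = 1.
Proof. by rewrite QsetE; exact/parabolic_det/scaledGLZ_group. Qed.

End Subgroups.

Section Quotients.
Variables (R : realType) (n : nat).
Local Notation SL := (SLt R n).
Local Notation GL := (GLt R n).
Local Notation piXdd := (\pi_(Xdd R n)).
Local Notation piXd1 := (\pi_(Xd1 R n)).

Lemma SLdet (h : SL) : \det (val h) = 1.
Proof. by case: h => h /=; rewrite inE. Qed.

Lemma SLunit (h : SL) : val h \in unitmx.
Proof. by rewrite unitmxE SLdet unitr1. Qed.

Lemma GLunit (m : GL) : val m \in unitmx.
Proof. by case: m => m /=; rewrite inE. Qed.

Lemma val_insubd_GL (M : 'M[R]_(n.+1)) : M \in unitmx -> val (insubd (GL1 R n) M) = M.
Proof. by move=> uM; rewrite insubdK // inE. Qed.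

Lemma piXdd_eqP (h h' : SL) :
  piXdd h = piXdd h' <-> exists q, Qset q /\ val h' = val h *m q.
Proof.
rewrite !unlock coset_pi_eqE.
exact: (@mx_rcoset_eqP _ _ _ (fun h : SL => val h) _ (@Qset_group R n)).
Qed.

Lemma clsPZE (m : GL) : clsPZ m = mx_rcoset (fun m : GL => val m) (@scaledGLZ R n) m.
Proof.
apply/seteqP; split=> m'.
  by move=> [lam [gam [l0 u e]]]; exists (lam *: intmx R gam); rewrite e scalemxAr; split=> //; exists lam, gam.
by move=> [_ [[lam [gam [l0 u ->]]] e]]; exists lam, gam; rewrite e scalemxAr.
Qed.

Lemma piXd1_eqP (m m' : GL) :
  piXd1 m = piXd1 m' <-> exists a, scaledGLZ a /\ val m' = val m *m a.
Proof.
rewrite !unlock coset_pi_eqE !clsPZE.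
exact: (@mx_rcoset_eqP _ _ _ (fun m : GL => val m) _ (@scaledGLZ_group R n)).
Qed.

Lemma repr_piXdd (h : SL) : exists q, Qset q /\ val (repr (piXdd h)) = val h *m q.
Proof. by apply/piXdd_eqP; rewrite reprK. Qed.

Lemma repr_piXd1 (m : GL) : exists a, scaledGLZ a /\ val (repr (piXd1 m)) = val m *m a.
Proof. by apply/piXd1_eqP; rewrite reprK. Qed.

End Quotients.

Section Hyperplane.
Variables (R : realType) (n : nat).
Local Notation wd := (widen_ord (leqnSn n.+1)).

Definition hvec (c : 'I_n.+1 -> R) : 'cV[R]_(n.+2) := \sum_i c i *: delta_mx (wd i) 0.

Lemma hvec_last c : hvec c ord_max 0 = 0.
Proof.
rewrite summxE big1 // => i _; rewrite !mxE.
have /negbTE -> : ord_max != wd i by rewrite -val_eqE /= neq_ltn ltn_ord orbT.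
by rewrite mulr0.
Qed.

Lemma mulmx_hvec k (M : 'M[R]_(k, n.+2)) c : M *m hvec c = \sum_i c i *: col (wd i) M.
Proof. by rewrite mulmx_sumr; apply: eq_bigr => i _; rewrite colE scalemxAr. Qed.

Lemma hvecK (w : 'cV[R]_(n.+2)) : w ord_max 0 = 0 -> hvec (fun i => w (wd i) 0) = w.
Proof.
move=> w0; rewrite [RHS]matrix_sum_delta big_ord_recr /= big_ord1 w0 scale0r addr0.
by apply: eq_bigr => i _; rewrite big_ord1.
Qed.

Lemma planeP (g : 'M[R]_(n.+2)) v :
  plane g v <-> exists2 w : 'cV_(n.+2), w ord_max 0 = 0 & v = g *m w.
Proof.
split=> [[c ->]|[w w0 ->]]; first by exists (hvec c); rewrite ?hvec_last ?mulmx_hvec.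
by exists (fun i => w (wd i) 0); rewrite -mulmx_hvec hvecK.
Qed.

Lemma lat_sub_planeP (g h : 'M[R]_(n.+2)) : g \in unitmx ->
  lat h `<=` plane g <-> forall j, (invmx g *m h) ord_max (wd j) = 0.
Proof.
move=> ug; split=> [sub j|h0 _ [c ->]].
  have /sub/planeP[w w0 hw] : lat h (col (wd j) h).
    exists (fun i => (i == j)%:Z); rewrite (bigD1 j) //= eqxx scale1r big1 ?addr0 //.
    by move=> i /negbTE ->; rewrite scale0r.
  by rewrite -w0 -(mulKmx ug w) -hw colE mulmxA -colE [RHS]mxE.
apply/(planeP g); exists (invmx g *m h *m hvec (fun i => (c i)%:~R)).
  rewrite mxE big_ord_recr /= hvec_last mulr0 addr0 big1 // => i _.
  by rewrite h0 mul0r.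
by rewrite !mulmxA mulmxV // mul1mx mulmx_hvec.
Qed.

End Hyperplane.

Section PlaneLattices.
Variables (R : realType) (n : nat).
Local Notation SL := (SLt R n).
Local Notation piXdd := (\pi_(Xdd R n)).

Lemma XP_piP (g h : SL) :
  XP (plane (val g)) (piXdd h) <-> blk_upper (invmx (val g) *m val h).
Proof.
have [q [Qq e]] := repr_piXdd h; rewrite /XP /= e.
rewrite lat_sub_planeP ?SLunit // -blk_upperP mulmxA blk_upper_mulr_parabolic //.
  exact: scaledGLZ_group.
by rewrite -QsetE.
Qed.

Lemma XP_gPQ (g : SL) : XP (plane (val g)) = gPQ g.
Proof.
apply/seteqP; split=> x.
  rewrite -[x]reprK => /XP_piP up; exists (repr x); last by [].
  exists (invmx (val g) *m val (repr x)); rewrite mulKVmx ?SLunit //.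
  by split=> //; apply/PsetP; rewrite det_mulmx det_inv !SLdet invr1 mulr1.
move=> [h [p [/PsetP[up _] e]] <-]; apply/XP_piP.
by rewrite e mulKmx ?SLunit.
Qed.

End PlaneLattices.

Section Embedding.
Variables (R : realType) (n : nat).
Local Notation SL := (SLt R n).
Local Notation GL := (GLt R n).
Local Notation piXdd := (\pi_(Xdd R n)).
Local Notation piXd1 := (\pi_(Xd1 R n)).

Lemma blk_diagM (m a : 'M[R]_(n.+1)) :
  blk m 0 (\det m)^-1 *m blk a 0 (\det a)^-1 = blk (m *m a) 0 (\det (m *m a))^-1.
Proof. by rewrite blkM mulmx0 scaler0 addr0 det_mulmx invfM. Qed.

Lemma pi_emb_Pset (g h : SL) (m : GL) b :
  val h = val g *m blk (val m) b (\det (val m))^-1 -> piXdd h = piXdd (emb g m).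
Proof.
move=> e; apply/esym/piXdd_eqP; exists (blk 1%:M (invmx (val m) *m b) 1); split.
  rewrite QsetE; exists 1%:M, (invmx (val m) *m b); rewrite det1 invr1.
  by case: (@scaledGLZ_group R n).
by rewrite e /= /embmx -mulmxA blkM mulmx1 mulr1 scaler0 addr0 mulKVmx ?GLunit.
Qed.

Lemma phi_pi (g : SL) (m : GL) : phi g (piXd1 m) = piXdd (emb g m).
Proof.
have [a [Sa e]] := repr_piXd1 m.
apply/esym/piXdd_eqP; exists (blk a 0 (\det a)^-1); split.
  by rewrite QsetE; exists a, 0.
by rewrite /= /embmx e -mulmxA blk_diagM.
Qed.

Lemma continuous_emb (g : SL) : continuous (emb g).
Proof.
have cval : continuous (fun m : GL => val m) by exact: initial_continuous.
apply: (@continuous_comp_initial _ _ _ set_val (emb g)).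
apply: continuous_mulmx; first exact: cst_continuous.
apply: continuous_blk => //; first exact: cst_continuous.
move=> m; apply: (@continuousV _ _ (fun m : GL => \det (val m))).
  by rewrite -unitfE -unitmxE GLunit.
exact: continuous_det.
Qed.

Lemma continuous_phi (g : SL) : continuous (phi g).
Proof.
apply: (@repr_comp_continuous _ _ _ (piXdd \o emb g)).
  by move=> m; apply: continuous_comp; [exact: continuous_emb | exact: pi_continuous].
by move=> m m' /eqP e; apply/eqP; rewrite /= -!phi_pi e.
Qed.

Lemma image_phi (g : SL) : phi g @` setT = XP (plane (val g)).
Proof.
rewrite XP_gPQ; apply/seteqP; split=> x.
  move=> [y _ <-]; exists (emb g (repr y)) => //.
  exists (blk (val (repr y)) 0 (\det (val (repr y)))^-1); split=> //.
  by exists (val (repr y)), 0; split=> //; exact: GLunit.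
move=> [h [_ [[m [b [um ->]]] e]] <-].
exists (piXd1 (insubd (GL1 R n) m)) => //.
by rewrite phi_pi; apply/esym/(pi_emb_Pset (b := b)); rewrite val_insubd_GL.
Qed.

Lemma phi_mulPset (g g' : SL) p : Pset p -> val g' = val g *m p ->
  exists m0 : GL, phi g' = phi g \o actGL m0.
Proof.
move=> [m0 [b0 [u0 ep]]] e; exists (insubd (GL1 R n) m0); apply: funext => x.
rewrite /= /actGL phi_pi; apply: pi_emb_Pset.
by rewrite /= /embmx e ep val_insubd_GL // -mulmxA blkM mulmx0 add0r det_mulmx invfM.
Qed.

Lemma gP_eqP (g g' : SL) : gP g = gP g' -> exists2 p, Pset p & val g' = val g *m p.
Proof.
move=> egP; have : gP g' (val g') by exists 1%:M; [case: (@Pset_group R n) | rewrite mulmx1].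
by rewrite -egP => -[p Pp ep]; exists p.
Qed.

End Embedding.

Section Inverse.
Variables (R : realType) (n : nat) (g : SLt R n).
Local Notation SL := (SLt R n).
Local Notation GL := (GLt R n).
Local Notation piXdd := (\pi_(Xdd R n)).
Local Notation piXd1 := (\pi_(Xd1 R n)).

Definition phi_inv (x : Xdd R n) : Xd1 R n :=
  piXd1 (insubd (GL1 R n) (ulblk (invmx (val g) *m val (repr x)))).

Lemma ulblk_unitmx_SL (h : SL) : blk_upper (invmx (val g) *m val h) ->
  ulblk (invmx (val g) *m val h) \in unitmx.
Proof. by move=> up; apply: ulblk_unitmx up _; rewrite unitmx_mul unitmx_inv !SLunit. Qed.

Lemma phi_inv_pi (h : SL) : blk_upper (invmx (val g) *m val h) ->
  phi_inv (piXdd h) = piXd1 (insubd (GL1 R n) (ulblk (invmx (val g) *m val h))).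
Proof.
move=> up; have [q [Qq e]] := repr_piXdd h.
have [a [b [Sa eq]]] : parabolic (@scaledGLZ R n) q by rewrite -QsetE.
apply/esym/piXd1_eqP; exists a; split=> //.
have ua : a \in unitmx by exact: mx_group_unitmx (@scaledGLZ_group R n) Sa.
rewrite e mulmxA eq ulblkM ?ulblkE //; last exact: blk_upper_blk.
by rewrite !val_insubd_GL ?unitmx_mul ?ua ?andbT // ulblk_unitmx_SL.
Qed.

Lemma phi_invK : cancel (phi g) phi_inv.
Proof.
move=> x; rewrite /phi phi_inv_pi /= /embmx mulKmx ?SLunit ?ulblkE ?valKd ?reprK //.
exact: blk_upper_blk.
Qed.

Definition SLmulQ (h : SL) (q : {q : 'M[R]_(n.+2) | Qset q}) : SL :=
  insubd h (val h *m sval q).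

Lemma val_SLmulQ h q : val (SLmulQ h q) = val h *m sval q.
Proof.
by rewrite insubdK // inE /SLset /= det_mulmx SLdet Qset_det ?mul1r //; exact: svalP.
Qed.

Lemma open_piXdd (O : set SL) : open O -> open (piXdd @` O).
Proof.
move=> oO; suff : open (piXdd @^-1` (piXdd @` O)) by [].
have -> : piXdd @^-1` (piXdd @` O) = \bigcup_q (SLmulQ ^~ q) @^-1` O.
  apply/seteqP; split=> h.
    move=> [h' Oh' /esym/piXdd_eqP[q [Qq e]]]; exists (exist _ q Qq) => //=.
    by have -> : SLmulQ h (exist _ q Qq) = h' by apply: val_inj; rewrite val_SLmulQ.
  move=> [q _ Oq]; exists (SLmulQ h q) => //.
  by apply/esym/piXdd_eqP; exists (sval q); split; [exact: svalP | exact: val_SLmulQ].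
apply: bigcup_open => q _; apply: (proj1 (continuousP _)) oO.
apply: (@continuous_comp_initial _ _ _ set_val (SLmulQ ^~ q)).
have -> : set_val \o SLmulQ ^~ q = (fun h => val h *m sval q).
  by apply: funext => h; exact: val_SLmulQ.
by apply: continuous_mulmx; [exact: initial_continuous | exact: cst_continuous].
Qed.

Lemma continuous_phi_inv : {within XP (plane (val g)), continuous phi_inv}.
Proof.
apply/continuousP => U [W oW eW]; apply/open_subspaceP.
pose O := [set h : SL | W (ulblk (invmx (val g) *m val h))].
exists (piXdd @` O).
  apply: open_piXdd; apply: (proj1 (continuousP _)) oW.
  apply: continuous_ulblk; apply: continuous_mulmx; first exact: cst_continuous.
  exact: initial_continuous.
have inW (h : SL) : blk_upper (invmx (val g) *m val h) ->
    W (ulblk (invmx (val g) *m val h)) <-> U (phi_inv (piXdd h)).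
  move=> up; rewrite phi_inv_pi //.
  rewrite -[U _]/((piXd1 @^-1` U) _) -eW /= -[set_val _]/(val _) val_insubd_GL //.
  exact: ulblk_unitmx_SL.
apply/seteqP; split=> y [Vy Xy]; split=> //.
  move: Vy Xy => [h Oh <-] /XP_piP up.
  by rewrite /= -inW.
rewrite -[y]reprK in Vy Xy *; move/XP_piP in Xy.
by exists (repr y); rewrite // /O /= inW.
Qed.

End Inverse.

Lemma continuous_borel_preimage (X Y : ptopologicalType) (f : X -> Y) :
  continuous f -> forall B : set Y, <<s @open Y >> B -> <<s @open X >> (f @^-1` B).
Proof.
move=> cf B mB.
have mf : measurable_fun setT (f : g_sigma_algebraType (@open X) -> g_sigma_algebraType (@open Y)).
  apply: (@measurability _ _ (g_sigma_algebraType (@open X))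
    (g_sigma_algebraType (@open Y)) setT f (@open Y)) => // _ [A oA <-].
  by apply: sub_sigma_algebra; rewrite setTI; exact: (proj1 (continuousP f) cf).
by have := mf measurableT B mB; rewrite setTI.
Qed.

Lemma phi_pushforward_mulPset (R : realType) (n : nat) (g g' : SLt R n) p :
  Pset p -> val g' = val g *m p ->
  forall mu : probability (BXd1 R n) R, PGL_invariant mu ->
  forall B : set (BXdd R n), measurable B -> mu (phi g @^-1` B) = mu (phi g' @^-1` B).
Proof.
move=> Pp e mu inv B mB; have [m0 ->] := phi_mulPset Pp e.
rewrite comp_preimage inv //.
exact: continuous_borel_preimage (@continuous_phi R n g) B mB.
Qed.

Unset Implicit Arguments.
Set Strict Implicit.

Theorem lemma2p1 (R : realType) (n : nat) (g : SLt R n) :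
  (* (1) *)
  XP (plane (val g)) = gPQ g /\
  (* (2) phi_g is a homeomorphism from X_{d-1} onto X_P (subspace topology) *)
  (continuous (phi g) /\ phi g @` setT = XP (plane (val g)) /\
   exists psi : Xdd R n -> Xd1 R n,
     (forall x, psi (phi g x) = x) /\ {within XP (plane (val g)), continuous psi}) /\
  (* (3) *)
  (forall g' : SLt R n, gP g = gP g' ->
   forall mu : probability (BXd1 R n) R, PGL_invariant mu ->
   forall B : set (BXdd R n), measurable B ->
     mu (phi g @^-1` B) = mu (phi g' @^-1` B)).
Proof.
split; first exact: XP_gPQ.
split; first by split; [exact: continuous_phi | split; [exact: image_phi |
  exists (phi_inv g); split; [exact: phi_invK | exact: continuous_phi_inv]]].
by move=> g' /gP_eqP[p Pp ep]; exact: phi_pushforward_mulPset Pp ep.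
Qed.
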